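(* Let $h$ be a penalty function on $\Delta$ with choice map $Q$ and let $p\in\Delta$. If $F_h(p,y_j)\to+\infty$ for some sequence $y_j\in\mathbb{R}^n$, then the sequence $x_j=Q(y_j)$ has no limit points in $\Delta_p$; in particular, $\liminf_{j\to\infty}\min\{x_{j,\alpha}:\alpha\in\operatorname{supp}(p)\}=0$.
   Context: $\Delta$ is the unit simplex of $\mathbb{R}^n$. A penalty function on $\Delta$ is $h:\Delta\to\mathbb{R}$, continuous, $C^\infty$ on the relative interior of every face of $\Delta$, and strongly convex: $h(tx_1+(1-t)x_2)\le th(x_1)+(1-t)h(x_2)-\tfrac12Kt(1-t)\|x_1-x_2\|^2$ for some $K>0$. $Q(y)=\arg\max_{x\in\Delta}\{\langle y,x\rangle-h(x)\}$; $h^*(y)=\max_{x\in\Delta}\{\langle y,x\rangle-h(x)\}$; Fenchel coupling $F_h(p,y)=h(p)+h^*(y)-\langle y,p\rangle$. $\Delta_p=\{x\in\Delta:\operatorname{supp}(x)\supseteq\operatorname{supp}(p)\}$. *)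

From HB Require Import structures.
From mathcomp Require Import all_boot all_order all_algebra.
From mathcomp Require Import all_classical all_reals all_analysis.
Set Implicit Arguments. Unset Strict Implicit. Unset Printing Implicit Defensive.
Import Order.TTheory GRing.Theory Num.Theory.
Import numFieldNormedType.Exports.
Local Open Scope classical_set_scope.
Local Open Scope ring_scope.

Section Defs.
Variables (R : realType) (n : nat).
Notation V := 'rV[R]_n.

Definition dotp (y x : V) : R := \sum_(i < n) y ord0 i * x ord0 i.
Definition sqnorm (x : V) : R := \sum_(i < n) (x ord0 i) ^+ 2.

Definition simplex : set V :=
  [set x | (forall i, 0 <= x ord0 i) /\ \sum_(i < n) x ord0 i = 1].

Definition supp (x : V) : {set 'I_n} := [set i | x ord0 i != 0].

Definition simplex_p (p : V) : set V :=
  [set x | simplex x /\ (supp p \subset supp x)].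

(* Relative interior of the face of Delta spanned by the index set S
   (nonempty S): the points of Delta whose support is exactly S. *)
Definition rel_int_face (S : {set 'I_n}) : set V :=
  [set x | simplex x /\ supp x = S].

Definition tangent (S : {set 'I_n}) : set V :=
  [set v | \sum_(i < n) v ord0 i = 0 /\ (forall i, i \notin S -> v ord0 i = 0)].

Fixpoint iter_dder (vs : seq V) (f : V -> R) : V -> R :=
  match vs with
  | [::] => f
  | v :: vs' => fun x => 'D_v (iter_dder vs' f) x
  end.

(* f is C^infty on the relative interior of the face spanned by S:
   all iterated directional derivatives along tangent directions exist
   at every point of the relative interior and are continuous there. *)
Definition smooth_on_face (S : {set 'I_n}) (f : V -> R) : Prop :=
  forall (vs : seq V), (forall v, v \in vs -> tangent S v) ->
    (forall v, tangent S v ->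
       forall x, rel_int_face S x -> derivable (iter_dder vs f) x v) /\
    {within rel_int_face S, continuous (iter_dder vs f)}.

Definition strongly_convex_on_simplex (h : V -> R) (K : R) : Prop :=
  forall x1 x2 : V, simplex x1 -> simplex x2 -> forall t : R, 0 <= t <= 1 ->
    h (t *: x1 + (1 - t) *: x2) <=
      t * h x1 + (1 - t) * h x2 - 2^-1 * K * t * (1 - t) * sqnorm (x1 - x2).

(* Penalty function on Delta (only its values on Delta matter). *)
Definition penalty (h : V -> R) : Prop :=
  {within simplex, continuous h} /\
  (forall S : {set 'I_n}, S != finset.set0 -> smooth_on_face S h) /\
  (exists K : R, 0 < K /\ strongly_convex_on_simplex h K).

Definition is_argmax (h : V -> R) (y x : V) : Prop :=
  simplex x /\ forall x', simplex x' -> dotp y x' - h x' <= dotp y x - h x.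

Definition choice_map (h : V -> R) (y : V) : V := xget 0 [set x | is_argmax h y x].

Definition conj_h (h : V -> R) (y : V) : R :=
  sup [set dotp y x - h x | x in simplex].

Definition fenchel (h : V -> R) (p y : V) : R := h p + conj_h h y - dotp y p.

End Defs.

From HB Require Import structures.
From mathcomp Require Import all_boot all_order all_algebra.
From mathcomp Require Import all_classical all_reals all_analysis.
From mathcomp Require Import ring lra.
Import Order.TTheory GRing.Theory Num.Theory.
Import numFieldNormedType.Exports.
Local Open Scope classical_set_scope.
Local Open Scope ring_scope.

(** Let [x = Q y]. Testing the optimality of [x] against the extrapolated point
    [x + s (x - p)], which stays in the simplex as long as the coordinates of
    [x] on [supp p] are at least [s], gives
    [s <y, x - p> <= h (x + s (x - p)) - h x], hence
    [F_h (p, y) = h p - h x + <y, x - p> <= (max h - min h) (1 + 1/s)].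
    Near a point of [Delta_p] one such [s] works uniformly, so [F_h (p, y_j)]
    cannot blow up along a subsequence of [x_j] converging there.  Since
    [{x in Delta | x_a >= e on supp p}] is compact, the minimal coordinate of
    [x_j] on [supp p] is then below every [e > 0] infinitely often. *)

Section Sequences.
Variable R : realType.

Lemma limn_inf_eq0 (u : R^nat) : bounded_fun u -> (forall j, 0 <= u j) ->
  (forall e, 0 < e -> ~ \forall j \near \oo, e <= u j) -> limn_inf u = 0.
Proof.
move=> ub u_ge0 small; rewrite limn_infE //.
have infs_ge0 k : 0 <= infs u k.
  apply: lb_le_inf => [|_ [j _ <-] //]; by exists (u k), k => /=.
apply/eqP; rewrite eq_le; apply/andP; split; last first.
  exact: le_trans (infs_ge0 0%N) (ub_le_sup (bounded_fun_has_ubound_infs ub) _).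
apply/ler_addgt0Pr => e e0; rewrite add0r.
apply: ge_sup; first by exists (infs u 0); exists 0%N.
move=> _ [k _ <-].
have [j kj uje] : exists2 j, (k <= j)%N & u j < e.
  apply: contra_notP (small e e0) => Nk; exists k => // j /= kj.
  by rewrite leNgt; apply/negP => uje; apply: Nk; exists j.
apply: le_trans (ltW uje); apply: ge_inf; last by exists j.
by exists 0 => _ [l _ <-].
Qed.

End Sequences.

Section Simplex.
Context {R : realType} {n : nat}.
Notation V := 'rV[R]_n.
Implicit Types (x p z : V) (S : {set 'I_n}).

Lemma continuous_sum (I : Type) (r : seq I) (f : I -> V -> R) :
  (forall i, continuous (f i)) -> continuous (fun x => \sum_(i <- r) f i x).
Proof.
move=> fc; elim: r => [|a r IH] x.
  by under eq_fun do rewrite big_nil; exact: cst_continuous.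
under eq_fun do rewrite big_cons; exact: cvgD (fc a x) (IH x).
Qed.

Lemma continuous_dotp (y : V) : continuous (dotp y).
Proof.
apply: continuous_sum => i x.
exact: cvgM (cvg_cst _) (@coord_continuous R 1 n ord0 i x).
Qed.

Lemma closed_coord_ge S (e : R) :
  closed [set x : V | forall i, i \in S -> e <= x ord0 i].
Proof.
have -> : [set x : V | forall i, i \in S -> e <= x ord0 i] =
    \bigcap_(i in [set i | i \in S]) ((fun x : V => x ord0 i) @^-1` [set t | e <= t]).
  by apply/seteqP; split => x /= H i; [move=> /H | exact: H].
apply: closed_bigI => i _; apply: preimage_closed; last exact: closed_ge.
by move=> x _; exact: coord_continuous.
Qed.

Lemma closed_simplex : closed (@simplex R n).
Proof.
have -> : @simplex R n = [set x : V | forall i, i \in finset.setT -> 0 <= x ord0 i] `&`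
    ((fun x : V => \sum_(i < n) x ord0 i) @^-1` [set 1]).
  apply/seteqP; split => x [x_ge0 x_sum]; split=> // i.
  exact: x_ge0 i (finset.in_setT i).
apply: closedI; first exact: closed_coord_ge.
apply: preimage_closed; last exact: closed_eq.
by move=> x _; apply: continuous_sum => i; exact: coord_continuous.
Qed.

Lemma simplex_coord_le1 i {x} : simplex x -> x ord0 i <= 1.
Proof.
case=> x_ge0 <-; rewrite (bigD1 i) //= lerDl.
by apply: sumr_ge0 => j _; exact: x_ge0.
Qed.

Lemma compact_simplex : compact (@simplex R n).
Proof.
apply: (subclosed_compact closed_simplex
  (rV_compact (fun=> @segment_compact R 0 1))) => x Sx i /=.
by rewrite in_itv /= Sx.1 (simplex_coord_le1 i Sx).
Qed.

Lemma simplex_p_coord_gt0 p z i : simplex_p p z -> i \in supp p -> 0 < z ord0 i.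
Proof.
case=> Sz /fintype.subsetP sub /sub; rewrite inE lt_neqAle eq_sym => ->.
exact: Sz.1.
Qed.

Lemma simplex_extrapolate {p x} {s : R} : simplex p -> simplex x -> 0 < s ->
  (forall i, i \in supp p -> s <= x ord0 i) -> simplex (x + s *: (x - p)).
Proof.
move=> Sp Sx s0 x_ge; split.
  move=> i; rewrite !mxE.
  have := Sx.1 i; have [ip|] := boolP (i \in supp p).
    by have := x_ge i ip; have := simplex_coord_le1 i Sp; nra.
  by rewrite inE negbK => /eqP ->; nra.
under eq_bigr do rewrite !mxE.
by rewrite big_split /= -mulr_sumr sumrB Sx.2 Sp.2 subrr mulr0 addr0.
Qed.

End Simplex.

Section Fenchel.
Variables (R : realType) (n : nat) (h : 'rV[R]_n -> R).
Notation V := 'rV[R]_n.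
Implicit Types (x y p : V).

Lemma is_argmax_choice_map y : {within @simplex R n, continuous h} ->
  @simplex R n !=set0 -> is_argmax h y (choice_map h y).
Proof.
move=> hc S0; apply: (xgetPex 0).
have fc : {within @simplex R n, continuous (fun x => dotp y x - h x)}.
  by move=> x; apply: cvgB (hc x); exact: continuous_subspaceT (continuous_dotp y) x.
have [c Sc c_max] := EVT_max_rV S0 (@compact_simplex R n) fc.
exists c; split; first by rewrite inE in Sc.
by move=> x Sx; apply: c_max; rewrite inE.
Qed.

Lemma conj_h_argmax {x y} : is_argmax h y x -> conj_h h y = dotp y x - h x.
Proof.
case=> Sx x_max; apply/eqP; rewrite eq_le; apply/andP; split.
  by apply: ge_sup; [exists (dotp y x - h x), x | move=> _ [x' Sx' <-]; exact: x_max].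
apply: ub_le_sup; last by exists x.
by exists (dotp y x - h x) => _ [x' Sx' <-]; exact: x_max.
Qed.

Lemma fenchel_argmax_le {p x y} {s : R} : is_argmax h y x -> 0 < s ->
  simplex (x + s *: (x - p)) ->
  fenchel h p y <= h p - h x + (h (x + s *: (x - p)) - h x) / s.
Proof.
move=> x_opt s0 Sw.
have dotp_w : dotp y (x + s *: (x - p)) = dotp y x + s * (dotp y x - dotp y p).
  rewrite /dotp mulrBr !mulr_sumr -sumrB -big_split /=.
  by apply: eq_bigr => i _; rewrite !mxE; ring.
have := x_opt.2 _ Sw; rewrite dotp_w => w_le.
have slope : dotp y x - dotp y p <= (h (x + s *: (x - p)) - h x) / s.
  by rewrite ler_pdivlMr //; nra.
by rewrite /fenchel (conj_h_argmax x_opt); lra.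
Qed.

Lemma fenchel_argmax_le_osc p x y (s m M : R) :
  (forall v, simplex v -> m <= h v <= M) -> simplex p -> is_argmax h y x ->
  0 < s -> (forall i, i \in supp p -> s <= x ord0 i) ->
  fenchel h p y <= (M - m) * (1 + s^-1).
Proof.
move=> h_bnd Sp x_opt s0 x_ge.
have Sw := simplex_extrapolate Sp x_opt.1 s0 x_ge.
apply: le_trans (fenchel_argmax_le x_opt s0 Sw) _.
have := h_bnd _ Sp; have := h_bnd _ Sw; have := h_bnd _ x_opt.1.
rewrite mulrDr mulr1 => /andP[? ?] /andP[? ?] /andP[? ?].
suff : (h (x + s *: (x - p)) - h x) / s <= (M - m) * s^-1 by lra.
by apply: ler_wpM2r; [rewrite invr_ge0 ltW | lra].
Qed.

End Fenchel.

Section Divergence.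
Variables (R : realType) (n : nat) (h : 'rV[R]_n -> R) (p : 'rV[R]_n).
Hypotheses (hc : {within @simplex R n, continuous h}) (Sp : simplex p).
Notation V := 'rV[R]_n.

Lemma bounded_on_simplex : exists m M, forall v : V, simplex v -> m <= h v <= M.
Proof.
have S0 : @simplex R n !=set0 by exists p.
have [vM SvM vM_max] := EVT_max_rV S0 compact_simplex hc.
have [vm Svm vm_min] := EVT_min_rV S0 compact_simplex hc.
by exists (h vm), (h vM) => v Sv; rewrite vm_min ?vM_max ?inE.
Qed.

Lemma fenchel_bounded_near (z : V) : simplex_p p z ->
  exists B, \forall x \near z, forall y, is_argmax h y x -> fenchel h p y <= B.
Proof.
move=> Spz; have [m [M h_bnd]] := bounded_on_simplex.
pose s := (\big[Num.min/1]_(i in supp p) z ord0 i) / 2.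
have s0 : 0 < s.
  rewrite divr_gt0 //; apply/bigmin_gtP; split=> // i.
  exact: simplex_p_coord_gt0 Spz.
exists ((M - m) * (1 + s^-1)).
apply: filterS (nbhsx_ballx z s s0) => x [_ zx] y x_opt.
apply: fenchel_argmax_le_osc h_bnd Sp x_opt s0 _ => i ip.
have := zx ord0 i; rewrite /ball /= ltr_norml => /andP[_].
have : s + s <= z ord0 i by rewrite -splitr; exact: bigmin_le_cond.
lra.
Qed.

Variables (y x : nat -> V).
Hypotheses (x_opt : forall j, is_argmax h (y j) (x j))
  (fenchel_oo : (fun j => fenchel h p (y j)) @ \oo --> +oo).

Lemma argmax_not_cluster (z : V) : simplex_p p z -> ~ cluster (x @ \oo) z.
Proof.
move=> /fenchel_bounded_near [B near_z] cl_z.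
pose large := [set j | B < fenchel h p (y j)].
have ev_large : \forall j \near \oo, large j by move/cvgryPgt : fenchel_oo; apply.
have ev_x_large : (x @ \oo) (x @` large).
  by apply: filterS ev_large => j large_j; exists j.
have [_ [[j Bj <-] /(_ (y j) (x_opt j))]] := cl_z _ _ ev_x_large near_z.
by rewrite leNgt Bj.
Qed.

Lemma argmax_min_supp_small (e : R) : 0 < e ->
  ~ \forall j \near \oo, e <= \big[Num.min/1]_(i in supp p) x j ord0 i.
Proof.
move=> e0 ev_ge.
pose K := @simplex R n `&` [set v : V | forall i, i \in supp p -> e <= v ord0 i].
have K_compact : compact K.
  apply: subclosed_compact (closedI closed_simplex (closed_coord_ge _ _))
    compact_simplex _.
  by move=> v [].
have [z [[Sz z_ge] cl_z]] : K `&` cluster (x @ \oo) !=set0.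
  apply: K_compact; apply: filterS ev_ge => j /bigmin_geP[_ x_ge].
  by split; [exact: (x_opt j).1 | exact: x_ge].
apply: argmax_not_cluster cl_z; split=> //.
apply/fintype.subsetP => i ip; rewrite inE gt_eqF //.
exact: lt_le_trans e0 (z_ge i ip).
Qed.

End Divergence.

Theorem propositionC4 (R : realType) (n : nat) (h : 'rV[R]_n -> R)
    (p : 'rV[R]_n) (y : nat -> 'rV[R]_n) :
  penalty h -> simplex p ->
  (fun j => fenchel h p (y j)) @ \oo --> +oo ->
  let x := fun j => choice_map h (y j) in
  (forall z, simplex_p p z -> ~ cluster (x @ \oo) z) /\
  limn_inf (fun j => \big[Num.min/1]_(i in supp p) x j ord0 i) = 0.
Proof.
move=> [hc _] Sp fenchel_oo x.
have x_opt j : is_argmax h (y j) (x j).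
  by apply: is_argmax_choice_map hc _; exists p.
split; first exact: argmax_not_cluster.
set u := fun j => _.
have u_ge0 j : 0 <= u j.
  by apply/bigmin_geP; split=> // i _; exact: (x_opt j).1.1.
have u_le1 j : u j <= 1 by exact: bigmin_le_id.
apply: limn_inf_eq0 => //; last exact: argmax_min_supp_small.
exists 1; split; first exact: num_real.
by move=> M M1 j _ /=; rewrite ger0_norm //; exact: le_trans (u_le1 j) (ltW M1).
Qed.
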